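(* Let $G=(V,E)$ be a finite undirected graph with independence number $\alpha_G$. For all $v\in V$, choose numbers $q_v\in(0,1]$ and define \[ c_v=\sum_{S\subseteq V\setminus\{v\}}\frac{\lambda_{S,v}}{1+|S|},\quad \lambda_{S,v}=\Big(\prod_{w\in S}q_w\Big)\Big(\prod_{u\in V\setminus(\{v\}\cup S)}(1-q_u)\Big),\quad Q_v=1-\prod_{w\in\mathcal{N}_v}(1-q_w). \] Then \[ Q=\sum_{v\in V}\frac{q_v c_v}{Q_v}\le\frac{\alpha_G+1}{1-e^{-1}}. \]
   Context: $\mathcal{N}_v=\{v\}\cup\{w:(v,w)\in E\}$ is the closed neighborhood of $v$. The independence number $\alpha_G$ is the largest size of a set of pairwise non-adjacent vertices. *)

From HB Require Import structures.
From mathcomp Require Import all_boot all_order all_algebra.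
From mathcomp Require Import reals sequences exp.
Set Implicit Arguments. Unset Strict Implicit. Unset Printing Implicit Defensive.
Import Order.TTheory GRing.Theory Num.Theory.
Local Open Scope ring_scope.

Section GraphDefs.
Variable T : finType.
Variable e : rel T.

Definition independent (S : {set T}) : bool :=
  [forall x in S, forall y in S, (x != y) ==> ~~ e x y].

Definition alpha : nat := \max_(S : {set T} | independent S) #|S|.

Definition nbhd (v : T) : {set T} := v |: [set w | e v w].

Variable R : realType.
Variable q : T -> R.

Definition lam (S : {set T}) (v : T) : R :=
  (\prod_(w in S) q w) * \prod_(u in ~: (v |: S)) (1 - q u).

Definition cv (v : T) : R :=
  \sum_(S : {set T} | S \subset ~: [set v]) lam S v / (1 + (#|S|)%:R).

Definition Qv (v : T) : R := 1 - \prod_(w in nbhd v) (1 - q w).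

End GraphDefs.

From HB Require Import structures.
From mathcomp Require Import all_boot all_order all_algebra.
From mathcomp Require Import reals sequences exp.
From mathcomp Require Import lra.
Import Order.TTheory GRing.Theory Num.Theory.
Set Implicit Arguments. Unset Strict Implicit. Unset Printing Implicit Defensive.
Local Open Scope ring_scope.

(* Let X be the random set containing each vertex w independently with
   probability q w, so that [subset_prob S] is the probability that X = S.
   Then q_v lam_{S,v} = P(X = S + v), hence sum_v q_v c_v = P(X <> {}) <= 1.
   With sigma_v = sum_{w in N_v} q_w we have 1 - Q_v <= exp(-sigma_v), and
   convexity of exp gives 1 - exp(-sigma) >= (1 - 1/e) min(sigma, 1), so the
   v-th term of Q is at most (q_v c_v + q_v / sigma_v) / (1 - 1/e).  Finally
   sum_v q_v / sigma_v <= alpha_G is a weighted Caro-Wei bound: the closed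
   neighbourhood of a vertex of minimal sigma contributes at most 1, and
   deleting it lowers the independence number while only increasing the
   remaining terms. *)

Lemma sum_setU1_notin (T : finType) (V : nmodType) (v : T) (F : {set T} -> V) :
  \sum_(S : {set T} | v \notin S) F (v |: S) = \sum_(S : {set T} | v \in S) F S.
Proof.
rewrite [RHS](reindex_onto (fun S => v |: S) (fun S => S :\ v)) /=; last first.
  by move=> S vS; rewrite setD1K.
apply: eq_bigl => S; rewrite setU11 /=.
apply/idP/eqP => [vS | <-]; first by rewrite setU1K.
by rewrite !inE eqxx.
Qed.

Lemma ler_sum_subset (R : numDomainType) (T : finType) (A B : {set T}) (F : T -> R) :
  A \subset B -> (forall i, 0 <= F i) -> \sum_(i in A) F i <= \sum_(i in B) F i.
Proof.
move=> sAB F_ge0; rewrite [X in _ <= X](big_setID A) /= (setIidPr sAB) lerDl.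
exact: sumr_ge0.
Qed.

Section RandomSubset.
Variables (T : finType) (R : realType) (q : T -> R).
Hypothesis q01 : forall v, 0 < q v <= 1.

Let q_ge0 v : 0 <= q v. Proof. by case/andP: (q01 v) => /ltW. Qed.
Let oneBq_ge0 v : 0 <= 1 - q v. Proof. by case/andP: (q01 v); rewrite subr_ge0. Qed.

Definition subset_prob (S : {set T}) : R :=
  (\prod_(w in S) q w) * \prod_(u in ~: S) (1 - q u).

Lemma sum_subset_prob : \sum_(S : {set T}) subset_prob S = 1.
Proof.
have := @bigA_distr R 0 1 *%R +%R T q (fun i => 1 - q i).
rewrite big1 => [->|i _]; last by rewrite /= subrKC.
apply: eq_bigr => S _; rewrite /subset_prob [in RHS](bigID (mem S)) /=.
congr (_ * _); first by apply: eq_bigr => i ->.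
by apply: eq_big => [i | i]; rewrite ?inE // => /negbTE ->.
Qed.

Lemma subset_prob_ge0 (S : {set T}) : 0 <= subset_prob S.
Proof. by rewrite mulr_ge0 // prodr_ge0. Qed.

Lemma lam_ge0 (S : {set T}) v : 0 <= lam q S v.
Proof. by rewrite mulr_ge0 // prodr_ge0. Qed.

Lemma mul_q_lam (S : {set T}) v : v \notin S -> q v * lam q S v = subset_prob (v |: S).
Proof.
move=> vS; rewrite /lam /subset_prob big_setU1 //= mulrA.
by congr (_ * _ * _); apply: eq_bigl.
Qed.

Lemma mul_1Bq_lam (S : {set T}) v : v \notin S -> (1 - q v) * lam q S v = subset_prob S.
Proof.
move=> vS; rewrite /lam /subset_prob mulrCA.
have -> : ~: S = v |: ~: (v |: S).
  by apply/setP => x; rewrite !inE; case: eqP => // ->; rewrite (negbTE vS).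
by rewrite [in RHS]big_setU1 //= !inE eqxx.
Qed.

Lemma cv_ge0 v : 0 <= cv q v.
Proof. by apply: sumr_ge0 => S _; rewrite divr_ge0 ?lam_ge0 ?addr_ge0. Qed.

Lemma cv_le1 v : cv q v <= 1.
Proof.
apply: (@le_trans _ _ (\sum_(S : {set T} | v \notin S) lam q S v)).
  rewrite /cv; under eq_bigl do rewrite subsetC sub1set inE.
  apply: ler_sum => S _; rewrite ler_piMr ?lam_ge0 //.
  by rewrite invf_le1 ?lerDl // ltr_wpDr.
rewrite -sum_subset_prob [in X in _ <= X](bigID (fun S : {set T} => v \in S)) /=.
rewrite addrC -sum_setU1_notin -big_split /=.
apply/ler_sum => S vS.
by rewrite -(mul_1Bq_lam vS) -(mul_q_lam vS) -mulrDl subrK mul1r.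
Qed.

Lemma sum_q_cv_le1 : \sum_v q v * cv q v <= 1.
Proof.
have -> : \sum_v q v * cv q v =
          \sum_v \sum_(S : {set T} | v \in S) subset_prob S / #|S|%:R.
  apply: eq_bigr => v _; rewrite -sum_setU1_notin /cv mulr_sumr.
  under eq_bigl do rewrite subsetC sub1set inE.
  apply: eq_bigr => S vS.
  by rewrite mulrA mul_q_lam // cardsU1 vS natrD.
rewrite -[X in _ <= X]sum_subset_prob (exchange_big_dep predT) //=.
apply: ler_sum => S _; rewrite sumr_const.
have [-> | S_gt0] := posnP #|S|; first by rewrite mulr0n subset_prob_ge0.
by rewrite -(mulr_natr (subset_prob S / _)) divfK // pnatr_eq0 -lt0n.
Qed.

End RandomSubset.

Section WeightedCaroWei.
Variables (T : finType) (e : rel T).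
Hypothesis e_sym : symmetric e.

Lemma independentP (S : {set T}) :
  reflect {in S &, forall x y, x != y -> ~~ e x y} (independent e S).
Proof.
apply: (iffP forallP) => [indS x y xS yS | indS x].
  by have /implyP/(_ xS)/forallP/(_ y)/implyP/(_ yS)/implyP := indS x.
apply/implyP => xS; apply/forallP => y; apply/implyP => yS; apply/implyP.
exact: indS.
Qed.

Lemma independent_setU1 (S : {set T}) v :
  independent e S -> [disjoint S & nbhd e v] -> independent e (v |: S).
Proof.
move=> /independentP indS dis_S_Nv.
have nadj w : w \in S -> ~~ e v w.
  move=> wS; apply: contraTN dis_S_Nv => evw.
  by apply/pred0Pn; exists w; rewrite /= wS !inE evw orbT.
apply/independentP => x y; rewrite !inE.
case/predU1P => [-> | xS] /predU1P [-> | yS] xy.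
- by rewrite eqxx in xy.
- exact: nadj.
- by rewrite e_sym nadj.
- exact: indS.
Qed.

Definition alpha_in (A : {set T}) : nat :=
  \max_(S : {set T} | independent e S && (S \subset A)) #|S|.

Lemma alpha_in_setT : alpha_in setT = alpha e.
Proof. by apply: eq_bigl => S; rewrite subsetT andbT. Qed.

Lemma alpha_in_attained (A : {set T}) :
  exists2 S : {set T}, independent e S && (S \subset A) & alpha_in A = #|S|.
Proof.
have [|S SA maxS] := eq_bigmax_cond (fun S : {set T} => #|S|)
  (A := [pred S : {set T} | independent e S && (S \subset A)]).
  apply/card_gt0P; exists set0; rewrite inE sub0set andbT.
  by apply/independentP => x; rewrite inE.
by exists S.
Qed.

Lemma alpha_in_setD_nbhd (A : {set T}) v :
  v \in A -> (alpha_in (A :\: nbhd e v) < alpha_in A)%N.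
Proof.
move=> vA.
have [S /andP[indS /subsetDP[sSA dis_S_Nv]] ->] := alpha_in_attained (A :\: nbhd e v).
have vS : v \notin S by rewrite (disjointFl dis_S_Nv) // !inE eqxx.
apply: (@leq_trans #|v |: S|); first by rewrite cardsU1 vS.
apply: leq_bigmax_cond.
by rewrite independent_setU1 // subUset sub1set vA.
Qed.

Variables (R : realFieldType) (q : T -> R).
Hypothesis q_gt0 : forall v, 0 < q v.

Definition nbhd_weight (A : {set T}) v : R := \sum_(w in nbhd e v :&: A) q w.

Lemma nbhd_weight_gt0 (A : {set T}) v : v \in A -> 0 < nbhd_weight A v.
Proof.
move=> vA; apply: (@lt_le_trans _ _ (\sum_(w in [set v]) q w)).
  by rewrite big_set1.
apply: ler_sum_subset => [|w]; last exact: ltW.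
by rewrite sub1set !inE eqxx vA.
Qed.

Lemma nbhd_weight_subset (A B : {set T}) v :
  A \subset B -> nbhd_weight A v <= nbhd_weight B v.
Proof. by move=> sAB; apply: ler_sum_subset => [|w]; [exact: setIS | exact: ltW]. Qed.

Lemma sum_nbhd_argmin_le1 (A : {set T}) v : v \in A ->
  (forall u, u \in A -> nbhd_weight A v <= nbhd_weight A u) ->
  \sum_(u in A :&: nbhd e v) q u / nbhd_weight A u <= 1.
Proof.
move=> vA v_min; have wv_gt0 := nbhd_weight_gt0 vA.
apply: (@le_trans _ _ (\sum_(u in A :&: nbhd e v) q u / nbhd_weight A v)).
  apply: ler_sum => u; rewrite inE => /andP[uA _].
  by rewrite ler_pM2l // lef_pV2 ?posrE ?nbhd_weight_gt0 ?v_min.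
by rewrite -mulr_suml setIC divff ?gt_eqF.
Qed.

Lemma weighted_caro_wei (A : {set T}) :
  \sum_(v in A) q v / nbhd_weight A v <= (alpha_in A)%:R.
Proof.
have [n] := ubnP #|A|; elim: n A => // n IH A /ltnSE A_le_n.
have [-> | [v0 v0A]] := set_0Vmem A; first by rewrite big_set0.
have [v vA v_min] := arg_minP (P := fun u => u \in A) (nbhd_weight A) v0A.
set B := A :\: nbhd e v.
have B_lt_A : (#|B| < #|A|)%N.
  apply/proper_card/properP; split; first exact: subsetDl.
  by exists v; rewrite // !inE eqxx.
have B_le : \sum_(u in B) q u / nbhd_weight A u <= (alpha_in B)%:R.
  apply: le_trans (IH B (leq_trans B_lt_A A_le_n)).
  apply: ler_sum => u uB; have /setDP[uA _] := uB.
  rewrite ler_pM2l // lef_pV2 ?posrE ?nbhd_weight_gt0 //.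
  exact/nbhd_weight_subset/subsetDl.
rewrite (big_setID (nbhd e v)) /= -/B.
apply: le_trans (lerD (sum_nbhd_argmin_le1 vA v_min) B_le) _.
by rewrite addrC natr1 ler_nat alpha_in_setD_nbhd.
Qed.

End WeightedCaroWei.

Section ExpBounds.
Variable R : realType.

Lemma expRN1_lt1 : expR (-1 : R) < 1.
Proof. by rewrite expR_lt1 ltrN10. Qed.

Lemma expRN_le_chord (s : R) : 0 <= s <= 1 -> expR (- s) <= 1 - (1 - expR (-1)) * s.
Proof.
case/andP => s_ge0 s_le1.
have := expR_ge1Dx s; have := expR_ge1Dx (s - 1).
rewrite expRD expRN -[_^-1]mul1r ler_pdivrMr ?expR_gt0 //.
set a := expR s; set b := expR (-1).
have a_gt0 : 0 < a by apply: expR_gt0.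
move=> hb ha; have h1 : 0 <= (a - 1 - s) * (1 - s) by apply: mulr_ge0; lra.
have h2 : 0 <= s * (a * b - s) by apply: mulr_ge0; lra.
nra.
Qed.

Lemma inv_1BexpRN_le (s : R) : 0 < s ->
  (1 - expR (- s))^-1 <= (1 + s^-1) / (1 - expR (-1)).
Proof.
move=> s_gt0; have k_gt0 : 0 < 1 - expR (-1 : R) by rewrite subr_gt0 expRN1_lt1.
have E_lt1 : expR (- s) < 1 by rewrite expR_lt1 oppr_lt0.
rewrite ler_pdivlMr // ler_pdivrMl ?subr_gt0 //.
have st : s * s^-1 = 1 by rewrite divff ?gt_eqF.
have t_gt0 : 0 < s^-1 by rewrite invr_gt0.
have [s_ge1 | s_lt1] := leP 1 s.
- have : expR (- s) <= expR (-1) by rewrite ler_expR lerN2.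
  nra.
- have /expRN_le_chord : 0 <= s <= 1 by rewrite !ltW.
  nra.
Qed.

End ExpBounds.

Section VertexBound.
Variables (T : finType) (e : rel T) (R : realType) (q : T -> R).
Hypothesis q01 : forall v, 0 < q v <= 1.

Let q_gt0 v : 0 < q v. Proof. by case/andP: (q01 v). Qed.

Lemma Qv_ge_1BexpRN v : 1 - expR (- nbhd_weight e q setT v) <= Qv e q v.
Proof.
rewrite /Qv lerD2l lerN2 /nbhd_weight setIT -sumrN expR_sum.
apply: ler_prod => w _; have /andP[_ q_le1] := q01 w.
by rewrite subr_ge0 q_le1 expR_ge1Dx.
Qed.

Lemma vertex_term_le v :
  q v * cv q v / Qv e q v <=
    (q v * cv q v + q v / nbhd_weight e q setT v) / (1 - expR (-1)).
Proof.
set s := nbhd_weight e q setT v; set x := q v * cv q v.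
have s_gt0 : 0 < s := nbhd_weight_gt0 e q_gt0 (in_setT v).
have k_gt0 : 0 < 1 - expR (-1 : R) by rewrite subr_gt0 expRN1_lt1.
have x_ge0 : 0 <= x := mulr_ge0 (ltW (q_gt0 v)) (cv_ge0 q01 v).
have x_le_q : x <= q v := ler_piMr (ltW (q_gt0 v)) (cv_le1 q01 v).
have E_gt0 : 0 < 1 - expR (- s) by rewrite subr_gt0 expR_lt1 oppr_lt0.
apply: (@le_trans _ _ (x * (1 - expR (- s))^-1)).
  apply: (ler_wpM2l x_ge0).
  by rewrite lef_pV2 ?posrE ?(lt_le_trans E_gt0) ?Qv_ge_1BexpRN.
apply: le_trans (ler_wpM2l x_ge0 (inv_1BexpRN_le s_gt0)) _.
by rewrite mulrA ler_pM2r ?invr_gt0 // mulrDr mulr1 lerD2l ler_pM2r ?invr_gt0.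
Qed.

End VertexBound.

Theorem lemma4 (T : finType) (e : rel T) (e_sym : symmetric e)
  (R : realType) (q : T -> R) (hq : forall v, 0 < q v <= 1) :
  \sum_(v : T) q v * cv q v / Qv e q v
    <= ((alpha e)%:R + 1) / (1 - expR (-1)).
Proof.
have q_gt0 v : 0 < q v by case/andP: (hq v).
have k_gt0 : 0 < 1 - expR (-1 : R) by rewrite subr_gt0 expRN1_lt1.
have caro_wei : \sum_v q v / nbhd_weight e q setT v <= (alpha e)%:R.
  rewrite -alpha_in_setT; apply: le_trans (weighted_caro_wei e_sym q_gt0 setT).
  by under [X in _ <= X]eq_bigl do rewrite in_setT.
apply: le_trans (ler_sum _ (fun v _ => vertex_term_le e hq v)) _.
rewrite -mulr_suml ler_pM2r ?invr_gt0 // big_split /= addrC.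
exact: lerD caro_wei (sum_q_cv_le1 hq).
Qed.
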